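(* Let $\mathbf{X}$, $\mathbf{A}$ be $\sigma$-structures, let $k\ge1$, and let $r$ be the maximum arity of a relation symbol in $\sigma$. Then: (1) if $\mathbb{P}^k\ne\emptyset$ and $r\le k$, then $\mathrm{SA}^k(\mathbf{X},\mathbf{A})$ is feasible; (2) if $\mathrm{SA}^{k+r-1}(\mathbf{X},\mathbf{A})$ is feasible, then $\mathbb{P}^k\ne\emptyset$.
   Context: A signature $\sigma$ is a finite set of relation symbols with arities $\operatorname{ar}(R)\ge1$; a $\sigma$-structure has finite universe and relations $R^\mathbf{A}\subseteq A^{\operatorname{ar}(R)}$. Constraints: $\mathcal{C}_\mathbf{X}=\{R(\mathbf{x}):R\in\sigma,\mathbf{x}\in R^\mathbf{X}\}$; $\{\mathbf{x}\}$ is the set of entries of a tuple $\mathbf{x}$. $\mathrm{SA}^k(\mathbf{X},\mathbf{A})$: variables $p_V(f)\in[0,1]$ ($V\subseteq X$, $1\le|V|\le k$, $f:V\to A$) and $p_{R(\mathbf{x})}(f)\in[0,1]$ ($R(\mathbf{x})\in\mathcal{C}_\mathbf{X}$, $f:\{\mathbf{x}\}\to A$); constraints $\sum_{f:V\to A}p_V(f)=1$; $p_U(f)=\sum_{g:V\to A,g|_U=f}p_V(g)$ for $\emptyset\ne U\subseteq V\subseteq X$, $|V|\le k$; $p_U(f)=\sum_{g:\{\mathbf{x}\}\to A,g|_U=f}p_{R(\mathbf{x})}(g)$ for $R(\mathbf{x})\in\mathcal{C}_\mathbf{X}$, $\emptyset\ne U\subseteq\{\mathbf{x}\}$, $|U|\le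 k$; $p_{R(\mathbf{x})}(f)=0$ if $f(\mathbf{x})\notin R^\mathbf{A}$. Feasible means a (rational) solution exists. The polytope $\mathbb{P}=\mathbb{P}(\mathbf{X},\mathbf{A})\subseteq[0,1]^{X\times A}$ has variables $y_{x,a}\in[0,1]$ subject to $\sum_{a\in A}y_{x,a}=1$ for each $x\in X$, and $\sum_{x\in\{\mathbf{x}\}}y_{x,f(x)}\le|\{\mathbf{x}\}|-1$ for each $R\in\sigma$, $\mathbf{x}\in R^\mathbf{X}$ and $f:\{\mathbf{x}\}\to A$ with $f(\mathbf{x})\notin R^\mathbf{A}$. Sherali–Adams: writing $\mathbb{P}=\{\mathbf{y}\in\mathbb{R}^n: M\mathbf{y}\ge\mathbf{b},\ 0\le\mathbf{y}\le1\}$ (equalities as pairs of inequalities), multiply each inequality of $M\mathbf{y}\ge\mathbf{b}$ by every term $\prod_{i\in I}y_i\prod_{j\in J}(1-y_j)$ with $I\cap J=\emptyset$, $|I\cup J|\le k-1$; linearize by replacing each $y_i^2$ by $y_i$ and each monomial $\prod_{i\in K}y_i$ by a new variable $z_K$, obtaining a polytope $\mathbb{P}^k_L$; then $\mathbb{P}^k=\{\mathbf{y}\in\mathbb{R}^n:\exists\mathbf{z}\in\mathbb{P}^k_L\text{ with }z_{\{i\}}=y_i\ \forall i\}$. *)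

From HB Require Import structures.
From mathcomp Require Import all_boot all_order all_algebra.

Set Implicit Arguments.
Unset Strict Implicit.
Unset Printing Implicit Defensive.

Import Order.TTheory GRing.Theory Num.Theory.
Local Open Scope ring_scope.

Section SheraliAdams.

Variable F : realFieldType.
Variables (sig : finType) (ar : sig -> nat) (X A : finType).
Variable relX : forall R : sig, {set (ar R).-tuple X}.
Variable relA : forall R : sig, {set (ar R).-tuple A}.

Definition entries n (t : n.-tuple X) : {set X} := [set x in t].

(* partial maps X -> A; a map f : V -> A is a partial map with domain V *)
Definition pfun := {ffun X -> option A}.
Definition pdom (f : pfun) : {set X} := [set x | f x != None].
Definition prestr (f : pfun) (U : {set X}) : pfun :=
  [ffun x => if x \in U then f x else None].

Definition SA_feasible (k : nat) : Prop :=
  exists (pV : {set X} -> pfun -> F)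
         (pC : forall R : sig, (ar R).-tuple X -> pfun -> F),
  [/\ (forall (V : {set X}) f, (0 < #|V| <= k)%N -> pdom f = V -> 0 <= pV V f <= 1)
       /\ (forall R t f, t \in relX R -> pdom f = entries t -> 0 <= pC R t f <= 1),
      (forall V : {set X}, (0 < #|V| <= k)%N -> \sum_(f | pdom f == V) pV V f = 1),
      (forall (U V : {set X}) f, U != set0 -> U \subset V -> (#|V| <= k)%N -> pdom f = U ->
          pV U f = \sum_(g | (pdom g == V) && (prestr g U == f)) pV V g),
      (forall R t (U : {set X}) f, t \in relX R -> U != set0 -> U \subset entries t ->
          (#|U| <= k)%N -> pdom f = U ->
          pV U f = \sum_(g | (pdom g == entries t) && (prestr g U == f)) pC R t g)
    & (forall R t f, t \in relX R -> pdom f = entries t ->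
          (forall u : (ar R).-tuple A, map f t = map Some u -> u \notin relA R) ->
          pC R t f = 0)].

(* variables y_{x,a} are indexed by T = X * A *)
Definition T := (X * A)%type.

(* multilinear polynomials in the y_i : coefficient of the monomial
   prod_{i in K} y_i, for K : {set T} (set0 = constant monomial) *)
Definition mlpoly := {set T} -> F.

Definition ml_aff (c0 : F) (c : T -> F) : mlpoly :=
  fun K => if K == set0 then c0
           else \sum_(i : T) (if K == [set i] then c i else 0).

(* product of polynomials followed by y_i^2 -> y_i *)
Definition ml_mul (p q : mlpoly) : mlpoly :=
  fun K => \sum_(K1 : {set T}) \sum_(K2 : {set T} | K1 :|: K2 == K) p K1 * q K2.

Definition ml_y (i : T) : mlpoly := ml_aff 0 (fun j => (j == i)%:R).
Definition ml_1my (j : T) : mlpoly := ml_aff 1 (fun i => - (i == j)%:R).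

Definition ml_term (I J : {set T}) : mlpoly :=
  foldr ml_mul (ml_aff 1 (fun _ => 0))
    ([seq ml_y i | i <- enum I] ++ [seq ml_1my j | j <- enum J]).

Definition linearize (z : {set T} -> F) (p : mlpoly) : F :=
  p set0 + \sum_(K : {set T} | K != set0) p K * z K.

(* The inequalities  M y >= b  of P, each written as  q(y) >= 0  with q
   affine; this includes the box constraints 0 <= y <= 1. *)
Definition Pineq (q : mlpoly) : Prop :=
  (exists x : X, q = ml_aff (-1) (fun i => if i.1 == x then 1 else 0))
  \/ (exists x : X, q = ml_aff 1 (fun i => if i.1 == x then -1 else 0))
  \/ (exists (R : sig) (t : (ar R).-tuple X) (g : {ffun X -> A}),
        [/\ t \in relX R, [tuple of map g t] \notin relA R &
            q = ml_aff (#|entries t|%:R - 1)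
                  (fun i => if (i.1 \in entries t) && (i.2 == g i.1) then -1 else 0)])
  \/ (exists i : T, q = ml_y i)
  \/ (exists i : T, q = ml_1my i).

Definition PkL (k : nat) (z : {set T} -> F) : Prop :=
  forall (q : mlpoly) (I J : {set T}),
    Pineq q -> [disjoint I & J] -> (#|I :|: J| <= k - 1)%N ->
    0 <= linearize z (ml_mul (ml_term I J) q).

Definition in_Pk (k : nat) (y : T -> F) : Prop :=
  exists z : {set T} -> F, PkL k z /\ forall i : T, z [set i] = y i.

Definition Pk_nonempty (k : nat) : Prop := exists y : T -> F, in_Pk k y.

End SheraliAdams.

(* Read the monomial of [K : {set T}] as the event "the assignment extends
   the partial map K".
   (1) From z in P^k_L put p_V(f) := z(graph f).  Lifting the equation
   sum_a y_(x,a) = 1 by the monomial of graph g (|dom g| < k) gives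
   sum_a z(graph g + (x,a)) = z(graph g), hence the marginal constraints by
   induction on |V \ U|; lifting y_i >= 0 gives nonnegativity, and lifting the
   constraint of a violated tuple by graph f minus one point gives
   -z(graph f) >= 0.
   (2) From a solution of SA^(k+r-1) put z(K) := p_(dom K)(K) when K is the
   graph of a partial map, and 0 otherwise.  A term of degree <= k-1 times an
   inequality of P only involves points of some W with |W| <= k+r-1, and on
   the monomials over W, z is the mixture sum_h p_W(h) [K \subset graph h] of
   0/1 points.  So the lifted inequality is the p_W-average of its values at
   these points: a nonnegative term times an inequality that holds at h
   unless p_W(h) = 0. *)

From HB Require Import structures.
From mathcomp Require Import all_boot all_order all_algebra.
From mathcomp Require Import lra zify.

Set Implicit Arguments.
Unset Strict Implicit.
Unset Printing Implicit Defensive.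

Import Order.TTheory GRing.Theory Num.Theory.
Local Open Scope ring_scope.

Lemma set1_neq0 (T : finType) (x : T) : [set x] != set0.
Proof. by rewrite -card_gt0 cards1. Qed.

Section MultilinearPolynomials.
Variables (F : realFieldType) (X A : finType).
Local Notation TT := (T X A).
Local Notation mlp := (mlpoly F X A).

Definition zval (z : {set TT} -> F) (K : {set TT}) : F :=
  if K == set0 then 1 else z K.

Lemma linearizeE z (p : mlp) : linearize z p = \sum_K p K * zval z K.
Proof.
rewrite /linearize [RHS](bigD1 set0) //= /zval eqxx mulr1; congr (_ + _).
by apply: eq_bigr => K /negbTE ->.
Qed.

Lemma sum_pair (G : TT -> F) : \sum_i G i = \sum_x \sum_a G (x, a).
Proof. by rewrite pair_bigA; apply: eq_bigr => -[]. Qed.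

Lemma sum_ml_aff (c0 : F) (c : TT -> F) (G : {set TT} -> F) :
  \sum_K ml_aff c0 c K * G K = c0 * G set0 + \sum_i c i * G [set i].
Proof.
rewrite (bigD1 set0) //= /ml_aff eqxx; congr (_ + _).
rewrite (eq_bigr (fun K => \sum_i (if K == [set i] then c i else 0) * G K)); last first.
  by move=> K /negbTE ->; rewrite mulr_suml.
rewrite exchange_big /=; apply: eq_bigr => i _.
rewrite (bigD1 [set i]) /=; last exact: set1_neq0.
by rewrite eqxx big1 ?addr0 // => K /andP [_ /negbTE ->]; rewrite mul0r.
Qed.

Lemma sum_ml_mul (p q : mlp) (G : {set TT} -> F) :
  \sum_K ml_mul p q K * G K = \sum_K1 \sum_K2 p K1 * q K2 * G (K1 :|: K2).
Proof.
rewrite /ml_mul; under eq_bigr do rewrite big_distrl /=.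
rewrite exchange_big /=; apply: eq_bigr => K1 _.
under eq_bigr do rewrite big_distrl /= big_mkcond /=.
rewrite exchange_big /=; apply: eq_bigr => K2 _.
rewrite (bigD1 (K1 :|: K2)) //= eqxx big1 ?addr0 // => K /negbTE.
by rewrite eq_sym => ->.
Qed.

Lemma ml_yE (i : TT) (K : {set TT}) : ml_y F i K = (K == [set i])%:R.
Proof.
rewrite /ml_y /ml_aff; case: eqP => [->|_].
  by rewrite eq_sym (negbTE (set1_neq0 i)).
rewrite (bigD1 i) //= eqxx big1 ?addr0; first by case: (K == [set i]).
by move=> j /negbTE ji; case: (K == [set j]); rewrite ?ji.
Qed.

Lemma ml_term_ind (Q : mlp -> Prop) (I J : {set TT}) :
  Q (ml_aff 1 (fun=> 0)) -> (forall p q, Q p -> Q q -> Q (ml_mul p q)) ->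
  (forall i, i \in I -> Q (ml_y F i)) -> (forall j, j \in J -> Q (ml_1my F j)) ->
  Q (ml_term F I J).
Proof.
move=> Q1 QM QI QJ.
have Qfold (f : TT -> mlp) (s : seq TT) q0 : Q q0 -> (forall i, i \in s -> Q (f i)) ->
    Q (foldr (@ml_mul F X A) q0 [seq f i | i <- s]).
  move=> Q0; elim: s => //= i s IH Qs; apply: QM; first by apply: Qs; rewrite inE eqxx.
  by apply: IH => j sj; apply: Qs; rewrite inE sj orbT.
rewrite /ml_term foldr_cat; apply: (Qfold) => [|i]; last by rewrite mem_enum; apply: QI.
by apply: Qfold => // j; rewrite mem_enum; apply: QJ.
Qed.

Lemma sum_ml_term0 (I : {set TT}) (G : {set TT} -> F) :
  \sum_K ml_term F I set0 K * G K = G I.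
Proof.
have sum_prod_y (s : seq TT) G' : \sum_K foldr (@ml_mul F X A) (ml_aff 1 (fun=> 0))
    [seq ml_y F i | i <- s] K * G' K = G' [set x in s].
  elim: s G' => [|a s IH] G' /=.
    by rewrite sum_ml_aff mul1r big1 ?addr0 // => i _; rewrite mul0r.
  rewrite sum_ml_mul (bigD1 [set a]) //= [X in _ + X]big1 ?addr0; last first.
    by move=> K1 Ka; apply: big1 => K2 _; rewrite ml_yE (negbTE Ka) !mul0r.
  under eq_bigr do rewrite ml_yE eqxx mul1r.
  rewrite (IH (fun K => G' ([set a] :|: K))); congr G'.
  by apply/setP => x; rewrite !inE.
rewrite /ml_term enum_set0 cats0 sum_prod_y; congr G.
by apply/setP => x; rewrite inE mem_enum.
Qed.

Lemma linearize_term0_aff z I c0 c :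
  linearize z (ml_mul (ml_term F I set0) (ml_aff c0 c)) =
  c0 * zval z I + \sum_i c i * zval z (I :|: [set i]).
Proof.
rewrite linearizeE sum_ml_mul (eq_bigr (fun K1 => ml_term F I set0 K1 *
    \sum_K2 ml_aff c0 c K2 * zval z (K1 :|: K2))); last first.
  by move=> K1 _; rewrite big_distrr; apply: eq_bigr => K2 _ /=; rewrite !mulrA.
by rewrite sum_ml_term0 sum_ml_aff setU0.
Qed.

Definition ml_eval (p : mlp) (S : {set TT}) : F := \sum_K p K * (K \subset S)%:R.

Lemma ml_evalM p q S : ml_eval (ml_mul p q) S = ml_eval p S * ml_eval q S.
Proof.
rewrite /ml_eval sum_ml_mul big_distrl /=; apply: eq_bigr => K1 _.
rewrite big_distrr /=; apply: eq_bigr => K2 _.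
by rewrite subUset; case: (K1 \subset S); case: (K2 \subset S); rewrite /= ?(mulr1, mulr0, mul0r).
Qed.

Lemma ml_eval_aff c0 c S : ml_eval (ml_aff c0 c) S = c0 + \sum_i c i * (i \in S)%:R.
Proof.
rewrite /ml_eval sum_ml_aff sub0set mulr1; congr (_ + _).
by apply: eq_bigr => i _; rewrite sub1set.
Qed.

Lemma ml_eval_y (i : TT) S : ml_eval (ml_y F i) S = (i \in S)%:R.
Proof.
rewrite ml_eval_aff add0r (bigD1 i) //= eqxx mul1r big1 ?addr0 //.
by move=> j /negbTE ->; rewrite mul0r.
Qed.

Lemma ml_eval_1my (i : TT) S : ml_eval (ml_1my F i) S = 1 - (i \in S)%:R.
Proof.
rewrite ml_eval_aff (bigD1 i) //= eqxx big1 ?addr0; first by rewrite mulN1r.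
by move=> j /negbTE ->; rewrite oppr0 mul0r.
Qed.

Lemma ml_eval_term_ge0 (I J S : {set TT}) : 0 <= ml_eval (ml_term F I J) S.
Proof.
apply: (ml_term_ind (Q := fun p => 0 <= ml_eval p S)).
- by rewrite ml_eval_aff big1 ?addr0 // => i _; rewrite mul0r.
- by move=> p q p0 q0; rewrite ml_evalM mulr_ge0.
- by move=> i _; rewrite ml_eval_y ler0n.
- by move=> j _; rewrite ml_eval_1my subr_ge0 lern1 leq_b1.
Qed.

Definition ml_supported (p : mlp) (W : {set X}) :=
  forall K, p K != 0 -> K \subset [set i : TT | i.1 \in W].

Lemma ml_supportedS (p : mlp) (D W : {set X}) :
  D \subset W -> ml_supported p D -> ml_supported p W.
Proof.
move=> sDW hp K /hp sK; apply/subsetP => i /(subsetP sK); rewrite !inE.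
exact: (subsetP sDW).
Qed.

Lemma ml_supported_mul (p q : mlp) (W : {set X}) :
  ml_supported p W -> ml_supported q W -> ml_supported (ml_mul p q) W.
Proof.
move=> hp hq K; apply: contraR => hK; apply/eqP.
rewrite /ml_mul big1 // => K1 _; apply: big1 => K2 /eqP hU.
have [->|/hp h1] := eqVneq (p K1) 0; first by rewrite mul0r.
have [->|/hq h2] := eqVneq (q K2) 0; first by rewrite mulr0.
by move: hK; rewrite -hU subUset h1 h2.
Qed.

Lemma ml_supported_aff (c0 : F) (c : TT -> F) (W : {set X}) :
  (forall i, c i != 0 -> i.1 \in W) -> ml_supported (ml_aff c0 c) W.
Proof.
move=> hc K; apply: contraR => hK; apply/eqP; rewrite /ml_aff.
case: eqP => [K0|_]; first by move: hK; rewrite K0 sub0set.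
apply: big1 => i _; case: eqP => // Ki.
have [//|/hc hi] := eqVneq (c i) 0.
by move: hK; rewrite Ki sub1set inE hi.
Qed.

Lemma ml_supported_term (I J : {set TT}) (W : {set X}) :
  (forall i, i \in I :|: J -> i.1 \in W) -> ml_supported (ml_term F I J) W.
Proof.
move=> hIJ; apply: (ml_term_ind (Q := ml_supported^~ W)).
- by apply: ml_supported_aff => i; rewrite eqxx.
- by move=> p q; apply: ml_supported_mul.
- move=> i iI; apply: ml_supported_aff => j; rewrite pnatr_eq0 eqb0 negbK => /eqP->.
  by apply: hIJ; rewrite inE iI.
- move=> i iJ; apply: ml_supported_aff => j; rewrite oppr_eq0 pnatr_eq0 eqb0 negbK.
  by move=> /eqP->; apply: hIJ; rewrite inE iJ orbT.
Qed.

Lemma linearize_mixture z (p : mlp) (W : {set X}) (H : finType) (w : H -> F) (S : H -> {set TT}) :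
  ml_supported p W ->
  (forall K : {set TT}, K \subset [set i : TT | i.1 \in W] ->
     zval z K = \sum_h w h * (K \subset S h)%:R) ->
  linearize z p = \sum_h w h * ml_eval p (S h).
Proof.
move=> hp hz; rewrite linearizeE.
rewrite (eq_bigr (fun K => \sum_h p K * (w h * (K \subset S h)%:R))); last first.
  move=> K _; have [->|/hp hK] := eqVneq (p K) 0.
    by rewrite mul0r big1 // => h _; rewrite mul0r.
  by rewrite hz // big_distrr.
rewrite exchange_big /=; apply: eq_bigr => h _.
by rewrite /ml_eval big_distrr /=; apply: eq_bigr => K _; rewrite mulrCA.
Qed.

End MultilinearPolynomials.

Section PartialMaps.
Variables (X A : finType).
Local Notation TT := (T X A).
Local Notation pf := (pfun X A).

Definition graph (h : pf) : {set TT} := [set i : TT | h i.1 == Some i.2].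

Lemma in_graph (h : pf) (i : TT) : (i \in graph h) = (h i.1 == Some i.2).
Proof. by rewrite inE. Qed.

Lemma in_pdom (h : pf) x : (x \in pdom h) = (h x != None).
Proof. by rewrite inE. Qed.

Lemma prestrE (g : pf) (U : {set X}) x : prestr g U x = if x \in U then g x else None.
Proof. by rewrite ffunE. Qed.

Lemma prestr_id (g : pf) (U : {set X}) : pdom g = U -> prestr g U = g.
Proof.
move=> gU; apply/ffunP => x; rewrite prestrE; case: ifP => // xU.
by move: xU; rewrite -gU in_pdom => /negbFE /eqP.
Qed.

Lemma pdom_prestr (g : pf) (U : {set X}) : pdom (prestr g U) = pdom g :&: U.
Proof.
by apply/setP => x; rewrite in_setI !in_pdom prestrE; case: (x \in U); rewrite ?andbT ?andbF.
Qed.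

Lemma prestr_prestr (g : pf) (U V : {set X}) : U \subset V -> prestr (prestr g V) U = prestr g U.
Proof.
move=> sUV; apply/ffunP => x; rewrite !prestrE; case: ifP => // xU.
by rewrite (subsetP sUV x xU).
Qed.

Lemma prestr_pdom_eq (f : pf) (U : {set X}) : pdom f = U ->
  forall g : pf, (pdom g == U) && (prestr g U == f) = (g == f).
Proof.
move=> fU g; apply/andP/eqP => [[/eqP gU /eqP <-]|->]; first by rewrite prestr_id.
by rewrite fU prestr_id // eqxx.
Qed.

Definition functional (K : {set TT}) :=
  [forall i, forall j, [&& i \in K, j \in K & i.1 == j.1] ==> (i == j)].
Definition gdom (K : {set TT}) : {set X} := [set i.1 | i in K].
Definition gfun (K : {set TT}) : pf := [ffun x => [pick a | (x, a) \in K]].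

Lemma functionalP (K : {set TT}) :
  reflect (forall i j, i \in K -> j \in K -> i.1 = j.1 -> i = j) (functional K).
Proof.
apply: (iffP forallP) => [fK i j iK jK ij|fK i].
  by move: (forallP (fK i) j); rewrite iK jK ij eqxx => /eqP.
by apply/forallP => j; apply/implyP => /and3P [iK jK /eqP ij]; apply/eqP/fK.
Qed.

Lemma gdomP (K : {set TT}) x : reflect (exists a, (x, a) \in K) (x \in gdom K).
Proof.
apply: (iffP imsetP) => [[[y a] ? /= ->]|[a xaK]]; first by exists a.
by exists (x, a).
Qed.

Lemma pdom_gfun (K : {set TT}) : pdom (gfun K) = gdom K.
Proof.
apply/setP => x; rewrite in_pdom ffunE.
case: pickP => [a xaK|noK] /=; first by apply/esym/gdomP; exists a.
by apply/esym/gdomP => [[a]]; rewrite noK.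
Qed.

Lemma gdom_sub (K : {set TT}) (W : {set X}) :
  K \subset [set i : TT | i.1 \in W] -> gdom K \subset W.
Proof. by move=> sK; apply/subsetP => x /gdomP [a /(subsetP sK)]; rewrite inE. Qed.

Lemma functional_graph (K : {set TT}) (h : pf) : K \subset graph h -> functional K.
Proof.
move=> sK; apply/functionalP => [[x a] [y b] /(subsetP sK) + /(subsetP sK) + /= xy].
by rewrite !in_graph /= xy => /eqP -> /eqP [->].
Qed.

Lemma prestr_gdom_eq (K : {set TT}) (h : pf) (W : {set X}) :
  functional K -> pdom h = W -> gdom K \subset W ->
  (prestr h (gdom K) == gfun K) = (K \subset graph h).
Proof.
move/functionalP=> fK hW sK; apply/eqP/subsetP => [hK [x a] xaK|sub].
  have xK : x \in gdom K by apply/gdomP; exists a.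
  move: (congr1 (fun g : pf => g x) hK); rewrite prestrE xK ffunE in_graph /=.
  case: pickP => [b xbK ->|noK]; last by rewrite noK in xaK.
  by case: (fK _ _ xaK xbK erefl) => ->.
apply/ffunP => x; rewrite prestrE ffunE.
case: ifPn => [/gdomP [a xaK]|xK].
  case: pickP => [b xbK|noK]; last by rewrite noK in xaK.
  case: (fK _ _ xbK xaK erefl) => ->.
  by move: (sub _ xaK); rewrite in_graph => /eqP.
case: pickP => [b xbK|//]; case/negP: xK; apply/gdomP; by exists b.
Qed.

Lemma card_graph (f : pf) : #|graph f| = #|pdom f|.
Proof.
have -> : pdom f = [set i.1 | i in graph f].
  apply/setP => x; rewrite in_pdom; apply/idP/imsetP => [|[[y a] + /= ->]].
    by case fx: (f x) => [a|] // _; exists (x, a); rewrite ?in_graph ?fx.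
  by rewrite in_graph /= => /eqP ->.
rewrite card_in_imset //; apply/functionalP.
exact: (functional_graph (subxx _)).
Qed.

Definition upd (g : pf) x a : pf := [ffun y => if y == x then Some a else g y].

Lemma graph_upd (g : pf) x a : g x = None -> graph (upd g x a) = graph g :|: [set (x, a)].
Proof.
move=> gx; apply/setP => [[y b]]; rewrite in_setU in_set1 !in_graph /= ffunE xpair_eqE.
by case: (eqVneq y x) => [->|] /=; rewrite ?gx ?orbF.
Qed.

Lemma pdom_upd (g : pf) x a : pdom (upd g x a) = x |: pdom g.
Proof. by apply/setP => y; rewrite in_setU1 !in_pdom ffunE; case: (eqVneq y x). Qed.

Lemma upd_inj (g : pf) x : injective (upd g x).
Proof. by move=> a b /(congr1 (fun h : pf => h x)); rewrite !ffunE eqxx => [[]]. Qed.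

Lemma prestr_upd (g : pf) x a (U : {set X}) :
  x \notin U -> prestr (upd g x a) U = prestr g U.
Proof.
move=> xU; apply/ffunP => y; rewrite !prestrE ffunE.
by case: ifP => // yU; case: eqP => // yx; rewrite -yx yU in xU.
Qed.

Lemma upd_prestr (g : pf) x a (V : {set X}) :
  pdom g = x |: V -> g x = Some a -> upd (prestr g V) x a = g.
Proof.
move=> gV gx; apply/ffunP => y; rewrite ffunE prestrE.
case: eqP => [->|/eqP yx] //; case: ifPn => // yV.
have : y \notin pdom g by rewrite gV in_setU1 negb_or yx.
by rewrite in_pdom negbK => /eqP.
Qed.

Lemma sum_pdom_setU1 (R : nmodType) (G : pf -> R) (U V : {set X}) (f : pf) x :
  x \notin V -> U \subset V ->
  \sum_(g | (pdom g == x |: V) && (prestr g U == f)) G g =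
  \sum_(g | (pdom g == V) && (prestr g U == f)) \sum_a G (upd g x a).
Proof.
move=> xV sUV; have xU : x \notin U by apply: contra xV; apply: subsetP.
rewrite (partition_big (fun g => prestr g V) (fun g => (pdom g == V) && (prestr g U == f))); last first.
  move=> g /andP [/eqP gV /eqP gf]; rewrite pdom_prestr gV prestr_prestr // gf eqxx andbT.
  by apply/eqP/setIidPr/subsetUr.
apply: eq_bigr => g' /andP [/eqP g'V /eqP g'f].
rewrite -(big_imset _ (in2W (@upd_inj g' x))) /=; apply: eq_bigl => g.
apply/idP/imsetP => [/andP [/andP [/eqP gV _] /eqP <-]|[a _ ->]].
  have : x \in pdom g by rewrite gV setU11.
  rewrite in_pdom; case gx: (g x) => [a|] // _.
  by exists a; rewrite ?(upd_prestr gV gx).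
by rewrite pdom_upd g'V eqxx !prestr_upd // g'f prestr_id // !eqxx.
Qed.

Lemma total_extension (f : pf) (E : {set X}) : pdom f = E -> E != set0 ->
  exists g : {ffun X -> A}, {in E, forall x, f x = Some (g x)}.
Proof.
move=> <- /set0Pn [x0]; rewrite in_pdom; case: (f x0) => [a0|] // _.
by exists [ffun x => odflt a0 (f x)] => x; rewrite in_pdom ffunE; case: (f x).
Qed.

End PartialMaps.

Section Entries.
Variables (X : finType) (n : nat).

Lemma card_entries (t : n.-tuple X) : (#|entries t| <= n)%N.
Proof. by rewrite cardsE (leq_trans (card_size t)) // size_tuple. Qed.

Lemma entries_neq0 (t : n.-tuple X) : (0 < n)%N -> entries t != set0.
Proof. by move=> n0; apply/set0Pn; exists (tnth t (Ordinal n0)); rewrite inE mem_tnth. Qed.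

End Entries.

Section PolytopeToSheraliAdams.
Variables (F : realFieldType) (sig : finType) (ar : sig -> nat) (X A : finType).
Variable relX : forall R : sig, {set (ar R).-tuple X}.
Variable relA : forall R : sig, {set (ar R).-tuple A}.
Local Notation TT := (T X A).
Local Notation pf := (pfun X A).
Variables (k : nat) (z : {set TT} -> F).
Hypothesis zP : PkL relX relA k z.

Lemma PkL_monomial_ineq (I : {set TT}) (c0 : F) (c : TT -> F) :
  Pineq relX relA (ml_aff c0 c) -> (#|I| <= k - 1)%N ->
  0 <= c0 * zval z I + \sum_i c i * zval z (I :|: [set i]).
Proof.
move=> qP Ik; rewrite -linearize_term0_aff; apply: zP => //.
  by rewrite -setI_eq0 setI0.
by rewrite setU0.
Qed.

Lemma zval_graph_ge0 (f : pf) : (#|pdom f| <= k)%N -> 0 <= zval z (graph f).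
Proof.
move=> fk; have [->|[i0 i0f]] := set_0Vmem (graph f); first by rewrite /zval eqxx.
have := @PkL_monomial_ineq (graph f :\ i0) 0 (fun j => (j == i0)%:R).
rewrite mul0r add0r (bigD1 i0) //= eqxx mul1r big1 ?addr0; last first.
  by move=> j /negbTE ->; rewrite mul0r.
rewrite setUC setD1K //; apply; first by right; right; right; left; exists i0.
by have := cardsD1 i0 (graph f); rewrite i0f card_graph /=; lia.
Qed.

Lemma sum_zval_graph_upd (g : pf) x : x \notin pdom g -> (#|pdom g| <= k - 1)%N ->
  \sum_a zval z (graph (upd g x a)) = zval z (graph g).
Proof.
move=> xg gk; have gx : g x = None by move: xg; rewrite in_pdom negbK => /eqP.
rewrite -card_graph in gk.
set S := \sum_i (if i.1 == x then 1 else 0) * zval z (graph g :|: [set i]).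
have -> : \sum_a zval z (graph (upd g x a)) = S.
  rewrite /S sum_pair (bigD1 x) //= [X in _ + X]big1 ?addr0; last first.
    by move=> y /negbTE yx; apply: big1 => a _; rewrite yx mul0r.
  by apply: eq_bigr => a _; rewrite eqxx mul1r graph_upd.
(* the two halves of [\sum_a y_(x, a) = 1], lifted by the monomial of [graph g] *)
have := PkL_monomial_ineq (or_introl (ex_intro _ x erefl)) gk; rewrite -/S.
have := PkL_monomial_ineq (or_intror (or_introl (ex_intro _ x erefl))) gk.
have -> : \sum_i (if i.1 == x then -1 else 0) * zval z (graph g :|: [set i]) = - S.
  by rewrite /S -sumrN; apply: eq_bigr => i _; case: ifP; rewrite ?mulN1r ?mul1r ?mul0r ?oppr0.
lra.
Qed.

Lemma zval_graph_marginal (U V : {set X}) (f : pf) :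
  U \subset V -> (#|V| <= k)%N -> pdom f = U ->
  zval z (graph f) = \sum_(g | (pdom g == V) && (prestr g U == f)) zval z (graph g).
Proof.
move=> + + fU; have [n] := ubnP #|V :\: U|; elim: n V => // n IH V VUn sUV Vk.
have [VU0|[x]] := set_0Vmem (V :\: U).
  have -> : V = U by apply/eqP; rewrite eqEsubset sUV -setD_eq0 VU0 eqxx.
  by rewrite (big_pred1 f) // => g; rewrite prestr_pdom_eq.
rewrite in_setD => /andP [xU xV].
have sUVx : U \subset V :\ x by rewrite subsetD1 sUV xU.
have VxUn : (#|V :\ x :\: U| < n)%N.
  have : V :\ x :\: U \proper V :\: U.
    apply/properP; split; first by apply/setSD/subD1set.
    by exists x; rewrite !inE ?eqxx ?xU ?xV.
  by move/proper_card; lia.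
have Vxk : (#|V :\ x| <= k - 1)%N by have := cardsD1 x V; rewrite xV /=; lia.
rewrite -(setD1K xV) sum_pdom_setU1 ?setD11 // (IH (V :\ x)) //; last by lia.
by apply: eq_bigr => g /andP [/eqP gV _]; rewrite sum_zval_graph_upd ?gV ?setD11.
Qed.

Lemma zval_graph_violating R (t : (ar R).-tuple X) (g : {ffun X -> A}) (f : pf) :
  t \in relX R -> [tuple of map g t] \notin relA R ->
  pdom f = entries t -> (0 < #|entries t| <= k)%N ->
  {in entries t, forall x, f x = Some (g x)} -> zval z (graph f) = 0.
Proof.
move=> tR gR fE /andP [E0 Ek] fg.
have [i0 i0f] : exists i0, i0 \in graph f by apply/set0Pn; rewrite -card_gt0 card_graph fE.
set I := graph f :\ i0.
have EI : #|entries t| = #|I|.+1 by rewrite -fE -card_graph (cardsD1 i0) i0f.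
have violated_at_graph (i : TT) :
    (if (i.1 \in entries t) && (i.2 == g i.1) then -1 else 0) = - (i \in graph f)%:R :> F.
  rewrite in_graph; case: (boolP (i.1 \in entries t)) => iE /=.
    by rewrite fg // (inj_eq Some_inj) [g _ == _]eq_sym; case: eqP; rewrite ?oppr0.
  by move: iE; rewrite -fE in_pdom negbK => /eqP ->; rewrite oppr0.
have sum_graph : \sum_i (i \in graph f)%:R * zval z (I :|: [set i]) =
                 zval z (graph f) + zval z I *+ #|I|.
  rewrite (bigD1 i0) //= i0f mul1r setUC setD1K //; congr (_ + _).
  rewrite -sumr_const [RHS]big_mkcond [LHS]big_mkcond /=; apply: eq_bigr => i _.
  rewrite /I in_setD1; case: (eqVneq i i0) => //= ii0.
  case: (boolP (i \in graph f)) => igf; last by rewrite mul0r.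
  by rewrite mul1r; congr zval; apply/setUidPl; rewrite sub1set in_setD1 ii0 igf.
(* lifted by [graph f] minus one point, the violated constraint reads [- z (graph f) >= 0] *)
have := @PkL_monomial_ineq I _ _ (or_intror (or_intror (or_introl
  (ex_intro _ R (ex_intro _ t (ex_intro _ g (And3 tR gR erefl))))))).
under eq_bigr do rewrite violated_at_graph mulNr.
have Ik : (#|I| <= k - 1)%N by lia.
rewrite sumrN sum_graph EI mulrSr addrK mulr_natl [zval z (graph f) + _]addrC.
rewrite opprD addrA subrr add0r oppr_ge0 => /(_ Ik) f_le0.
by apply/eqP; rewrite eq_le f_le0 zval_graph_ge0 // fE.
Qed.

Theorem SA_feasible_of_PkL :
  (forall R, 0 < ar R)%N -> (forall R, ar R <= k)%N -> SA_feasible F relX relA k.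
Proof.
move=> ar0 ark.
have Ek R (t : (ar R).-tuple X) : (0 < #|entries t| <= k)%N.
  by rewrite card_gt0 entries_neq0 // (leq_trans (card_entries t)).
have sum1 (V : {set X}) : (0 < #|V| <= k)%N -> \sum_(f | pdom f == V) zval z (graph f) = 1.
  move=> /andP [_ Vk]; pose f0 : pf := [ffun => None].
  have f0_empty : pdom f0 = set0 by apply/setP => x; rewrite in_pdom ffunE inE eqxx.
  have := zval_graph_marginal (sub0set V) Vk f0_empty.
  have -> : graph f0 = set0 by apply/setP => i; rewrite in_graph ffunE inE.
  rewrite {1}/zval eqxx => ->; apply: eq_bigl => g.
  by rewrite [prestr g set0 == f0](_ : _ = true) ?andbT //; apply/eqP/ffunP => x; rewrite !ffunE inE.
have bounds (V : {set X}) (f : pf) : (0 < #|V| <= k)%N -> pdom f = V ->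
    0 <= zval z (graph f) <= 1.
  move=> /[dup] /andP [_ Vk] V0k fV; rewrite zval_graph_ge0 ?fV //= -(sum1 V V0k).
  rewrite (bigD1 f) ?fV ?eqxx //= lerDl sumr_ge0 // => g /andP [/eqP gV _].
  by rewrite zval_graph_ge0 ?gV.
exists (fun V f => zval z (graph f)), (fun R t f => zval z (graph f)); split => //.
- by split=> [|R t f _]; [exact: bounds | exact: bounds].
- by move=> U V f _ sUV Vk fU; apply: zval_graph_marginal.
- by move=> R t U f _ _ sUt _ fU; apply: zval_graph_marginal => //; case/andP: (Ek R t).
move=> R t f tR ft fviol; have [g fg] := total_extension ft (entries_neq0 t (ar0 R)).
apply: (zval_graph_violating tR _ ft (Ek R t) fg); apply: fviol.
by rewrite -map_comp; apply/eq_in_map => x xt; rewrite /= fg // inE.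
Qed.
End PolytopeToSheraliAdams.

Section SheraliAdamsToPolytope.
Variables (F : realFieldType) (sig : finType) (ar : sig -> nat) (X A : finType).
Variable relX : forall R : sig, {set (ar R).-tuple X}.
Variable relA : forall R : sig, {set (ar R).-tuple A}.
Local Notation TT := (T X A).
Local Notation pf := (pfun X A).

Lemma sum_fiber_graph (h : pf) x a (c : F) : h x = Some a ->
  \sum_(i : TT) (if i.1 == x then c else 0) * (i \in graph h)%:R = c.
Proof.
move=> hx; rewrite sum_pair (bigD1 x) //= [X in _ + X]big1 ?addr0; last first.
  by move=> y /negbTE yx; rewrite big1 // => b _; rewrite yx mul0r.
rewrite (bigD1 a) //= eqxx in_graph hx eqxx mulr1 big1 ?addr0 // => b ba.
by rewrite in_graph /= hx (inj_eq Some_inj) eq_sym (negbTE ba) mulr0.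
Qed.

Lemma ml_eval_violation (E : {set X}) (g : {ffun X -> A}) (h : pf) :
  ml_eval (ml_aff (#|E|%:R - 1)
     (fun i : TT => if (i.1 \in E) && (i.2 == g i.1) then -1 else 0)) (graph h)
  = \sum_(x in E) (1 - (h x == Some (g x))%:R) - 1 :> F.
Proof.
rewrite ml_eval_aff sum_pair sumrB sumr_const -mulr_natl mulr1 addrAC; congr (_ + _ + _).
rewrite -sumrN [RHS]big_mkcond; apply: eq_bigr => x _.
rewrite (bigD1 (g x)) //= eqxx big1 ?addr0; last by move=> a /negbTE ->; rewrite andbF mul0r.
by case: (x \in E); rewrite /= ?oppr0 ?mul0r // in_graph mulN1r.
Qed.

Variables (m : nat) (pV : {set X} -> pf -> F)
  (pC : forall R : sig, (ar R).-tuple X -> pf -> F).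
Hypothesis pV_ge0 : forall (V : {set X}) f,
  (0 < #|V| <= m)%N -> pdom f = V -> 0 <= pV V f.
Hypothesis pV_sum1 : forall V : {set X},
  (0 < #|V| <= m)%N -> \sum_(f | pdom f == V) pV V f = 1.
Hypothesis pV_marginal : forall (U V : {set X}) f,
  U != set0 -> U \subset V -> (#|V| <= m)%N -> pdom f = U ->
  pV U f = \sum_(g | (pdom g == V) && (prestr g U == f)) pV V g.
Hypothesis pC_marginal : forall R (t : (ar R).-tuple X) (U : {set X}) (f : pf),
  t \in relX R -> U != set0 -> U \subset entries t -> (#|U| <= m)%N -> pdom f = U ->
  pV U f = \sum_(g | (pdom g == entries t) && (prestr g U == f)) pC t g.
Hypothesis pC_violating : forall R (t : (ar R).-tuple X) (f : pf),
  t \in relX R -> pdom f = entries t ->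
  (forall u : (ar R).-tuple A, map f t = map Some u -> u \notin relA R) -> pC t f = 0.

Definition z_of_SA (K : {set TT}) : F :=
  if functional K then pV (gdom K) (gfun K) else 0.

Lemma zval_SA_mixture (W : {set X}) : (0 < #|W| <= m)%N ->
  forall K : {set TT}, K \subset [set i : TT | i.1 \in W] ->
  zval z_of_SA K = \sum_h (if pdom h == W then pV W h else 0) * (K \subset graph h)%:R.
Proof.
move=> /[dup] W0m /andP [_ Wm] K KW; rewrite /zval /z_of_SA.
have [->|K0] := eqVneq K set0.
  rewrite -[LHS](pV_sum1 W0m) big_mkcond /=.
  by apply: eq_bigr => h _; rewrite sub0set mulr1.
case: ifP => fK; last first.
  apply/esym/big1 => h _; case: (boolP (K \subset graph h)) => [/functional_graph|].
    by rewrite fK.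
  by rewrite mulr0.
rewrite (pV_marginal (V := W)) ?imset_eq0 ?gdom_sub ?pdom_gfun // big_mkcond /=.
apply: eq_bigr => h _; have [hW|] := eqVneq (pdom h) W; last by rewrite mul0r.
by rewrite /= (prestr_gdom_eq fK hW (gdom_sub KW)); case: (K \subset graph h); rewrite ?(mulr1, mulr0).
Qed.

Lemma linearize_z_of_SA_ge0 (q : mlpoly F X A) (I J : {set TT}) (D : {set X}) :
  D != set0 -> (#|I :|: J| + #|D| <= m)%N -> ml_supported q D ->
  (forall (W : {set X}) (h : pf), D \subset W -> (0 < #|W| <= m)%N -> pdom h = W ->
     0 <= pV W h * ml_eval q (graph h)) ->
  0 <= linearize z_of_SA (ml_mul (ml_term F I J) q).
Proof.
move=> D0 IJDm qD q_ge0; set W := [set i.1 | i in I :|: J] :|: D.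
have DW : D \subset W by apply: subsetUr.
have W0m : (0 < #|W| <= m)%N.
  rewrite card_gt0 (subset_neq0 DW) //=.
  apply: leq_trans (leq_card_setU _ _) _; apply: leq_trans IJDm.
  by rewrite leq_add2r leq_imset_card.
rewrite (linearize_mixture _ (zval_SA_mixture W0m)); last first.
  apply: ml_supported_mul; last exact: ml_supportedS qD.
  by apply: ml_supported_term => i iIJ; rewrite inE imset_f.
apply: sumr_ge0 => h _; case: eqP => [hW|_]; last by rewrite mul0r.
by rewrite ml_evalM mulrCA mulr_ge0 ?ml_eval_term_ge0 ?q_ge0.
Qed.

Lemma pV_violating R (t : (ar R).-tuple X) (g : {ffun X -> A}) (W : {set X}) (h : pf) :
  t \in relX R -> [tuple of map g t] \notin relA R ->
  entries t != set0 -> entries t \subset W -> (#|W| <= m)%N -> pdom h = W ->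
  {in entries t, forall x, h x = Some (g x)} -> pV W h = 0.
Proof.
move=> tR gR E0 EW Wm hW hg; set f := prestr h (entries t).
have fE : pdom f = entries t by rewrite pdom_prestr hW; apply/setIidPr.
have Em : (#|entries t| <= m)%N by apply: leq_trans (subset_leq_card EW) Wm.
have pVf0 : pV (entries t) f = 0.
  rewrite (pC_marginal tR E0 (subxx _) Em fE) (big_pred1 f) => [|g']; last first.
    exact: prestr_pdom_eq.
  apply: pC_violating => // u fu; suff -> : u = [tuple of map g t] by [].
  apply/val_inj/(inj_map Some_inj); rewrite -fu /= -map_comp.
  by apply/eq_in_map => x xt; rewrite /= prestrE inE xt hg // inE.
apply/eqP; rewrite eq_le pV_ge0 ?hW ?card_gt0 ?(subset_neq0 EW) // andbT -pVf0.
rewrite (pV_marginal E0 EW Wm fE) (bigD1 h) /= ?hW ?eqxx //.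
rewrite lerDl sumr_ge0 // => g' /andP [/andP [/eqP g'W _] _].
by apply: pV_ge0 g'W; rewrite card_gt0 (subset_neq0 EW).
Qed.

Variable r : nat.
Hypotheses (r_gt0 : (0 < r)%N) (ar_gt0 : forall R, (0 < ar R)%N)
  (ar_le : forall R, (ar R <= r)%N).

Lemma Pineq_SA_local (q : mlpoly F X A) : Pineq relX relA q ->
  exists D : {set X}, [/\ D != set0, (#|D| <= r)%N, ml_supported q D &
    forall (W : {set X}) (h : pf), D \subset W -> (0 < #|W| <= m)%N -> pdom h = W ->
      0 <= pV W h * ml_eval q (graph h)].
Proof.
have defined_at (W : {set X}) (h : pf) x : [set x] \subset W -> pdom h = W ->
    exists a, h x = Some a.
  by move=> + hW; rewrite sub1set -hW in_pdom; case: (h x) => // a _; exists a.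
have fiber_supported x (c0 c : F) :
    ml_supported (ml_aff c0 (fun i : TT => if i.1 == x then c else 0)) [set x].
  by apply: ml_supported_aff => i; case: (eqVneq i.1 x) => [-> _|_]; rewrite ?set11 ?eqxx.
case=> [[x ->]|[[x ->]|[[R [t [g [tR gR ->]]]]|[[i ->]|[i ->]]]]].
- exists [set x]; split; [exact: set1_neq0 | by rewrite cards1 | exact: fiber_supported |].
  move=> W h xW _ hW; have [a hx] := defined_at W h x xW hW.
  by rewrite ml_eval_aff (sum_fiber_graph 1 hx) addNr mulr0.
- exists [set x]; split; [exact: set1_neq0 | by rewrite cards1 | exact: fiber_supported |].
  move=> W h xW _ hW; have [a hx] := defined_at W h x xW hW.
  by rewrite ml_eval_aff (sum_fiber_graph (-1) hx) addrN mulr0.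
- exists (entries t); split; rewrite ?entries_neq0 ?(leq_trans (card_entries t)) //.
    by apply: ml_supported_aff => i; case: ifP => [/andP [] //|_]; rewrite eqxx.
  move=> W h EW /[dup] W0m /andP [_ Wm] hW; rewrite ml_eval_violation.
  have [agree|/forall_inPn [x xE hgx]] := boolP [forall x in entries t, h x == Some (g x)].
    rewrite (pV_violating tR gR _ EW Wm hW) ?mul0r ?entries_neq0 // => x xE.
    by apply/eqP; move/forall_inP: agree; apply.
  rewrite mulr_ge0 ?(pV_ge0 W0m hW) // subr_ge0 (bigD1 x) //= (negbTE hgx) subr0 lerDl.
  by apply: sumr_ge0 => y _; case: (_ == _); rewrite ?subrr ?subr0.
- exists [set i.1]; split; rewrite ?set1_neq0 ?cards1 //.
    by apply: ml_supported_aff => j; case: (eqVneq j i) => [-> _|_]; rewrite ?set11 ?eqxx.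
  by move=> W h _ W0m hW; rewrite ml_eval_y mulr_ge0 ?pV_ge0.
- exists [set i.1]; split; rewrite ?set1_neq0 ?cards1 //.
    by apply: ml_supported_aff => j; case: (eqVneq j i) => [-> _|_]; rewrite ?set11 ?oppr0 ?eqxx.
  by move=> W h _ W0m hW; rewrite ml_eval_1my mulr_ge0 ?pV_ge0 // subr_ge0 lern1 leq_b1.
Qed.

Theorem PkL_z_of_SA (k : nat) : (k - 1 + r <= m)%N -> PkL relX relA k z_of_SA.
Proof.
move=> krm q I J qP _ IJk; have [D [D0 Dr qD q_ge0]] := Pineq_SA_local qP.
by apply: linearize_z_of_SA_ge0 D0 _ qD q_ge0; lia.
Qed.

End SheraliAdamsToPolytope.

Local Close Scope ring_scope.

Theorem lemmaA1 (F : realFieldType) (sig : finType) (ar : sig -> nat)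
    (X A : finType)
    (relX : forall R : sig, {set (ar R).-tuple X})
    (relA : forall R : sig, {set (ar R).-tuple A})
    (k : nat) :
  (forall R : sig, 0 < ar R) -> 0 < #|sig| -> 0 < k ->
  let r := \max_(R : sig) ar R in
  (Pk_nonempty F relX relA k -> r <= k -> SA_feasible F relX relA k) /\
  (SA_feasible F relX relA (k + r - 1) -> Pk_nonempty F relX relA k).
Proof.
move=> ar_gt0 sig_gt0 k_gt0 r.
have ar_le R : ar R <= r by apply: leq_bigmax.
have r_gt0 : 0 < r by case/card_gt0P: sig_gt0 => R _; apply: leq_trans (ar_le R).
split=> [[y [z [zP _]]] rk | [pV [pC [[pV01 _] pV_sum1 pV_marg pC_marg pC_viol]]]].
  by apply: SA_feasible_of_PkL zP _ _ => // R; apply: leq_trans (ar_le R) rk.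
have pV_ge0 (V : {set X}) f : 0 < #|V| <= k + r - 1 -> pdom f = V -> (0 <= pV V f)%R.
  by move=> V0m fV; case/andP: (pV01 V f V0m fV).
exists (fun i => z_of_SA pV [set i]), (z_of_SA pV); split => //.
by apply: (PkL_z_of_SA pV_ge0 pV_sum1 pV_marg pC_marg pC_viol r_gt0 ar_gt0 ar_le); lia.
Qed.
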